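(* Let $D$ be an $\ell$-dimensional simplex and $\mathcal{F}$ a nonempty collection of faces of $D$, with $m=\#\mathcal{F}$. Then: (i) the union $\mathcal{P}=\bigcup_{F\in\mathcal{F}}F$ is a simplicial complex inside $D$, and the number of $k$-facets of $D$ contained in $\mathcal{P}$ is $\sum_{r=1}^m(-1)^{r-1}\binom{\ell+1-r}{k+1}\binom{m}{r}$; (ii) letting $\mathcal{C}$ be the set of facets of $D$ not contained in $\mathcal{P}$: (ii.1) every facet in $\mathcal{C}$ has codimension at most $\ell+1-m$; (ii.2) the number of facets in $\mathcal{C}$ of codimension $j$ is $\binom{\ell+1-m}{j}$; (ii.3) the total number of facets in $\mathcal{C}$ is $2^{\ell+1-m}$.
   Context: An $\ell$-simplex $D$ is the convex hull of $\ell+1$ affinely independent points (its vertices). For a nonempty subset $K$ of the vertices with $k+1$ elements, the convex hull of $K$ is a $k$-facet of $D$ (so $D$ itself is its unique $\ell$-facet). A face of $D$ is an $(\ell-1)$-facet. Codimension of a $k$-facet is $\ell-k$. *)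

From mathcomp Require Import all_boot all_order all_algebra.
From mathcomp Require Import boolp.
Set Implicit Arguments. Unset Strict Implicit. Unset Printing Implicit Defensive.
Import Order.TTheory GRing.Theory Num.Theory.
Local Open Scope ring_scope.

Section Simplex.
Variables (R : realFieldType) (n l : nat).
Variable v : 'I_l.+1 -> 'rV[R]_n.

Definition affine_indep : Prop :=
  forall c : 'I_l.+1 -> R, \sum_i c i = 0 -> \sum_i c i *: v i = 0 ->
    forall i, c i = 0.

Definition conv_hull (K : {set 'I_l.+1}) : 'rV[R]_n -> Prop :=
  fun x => exists w : 'I_l.+1 -> R,
    [/\ forall i, 0 <= w i, forall i, i \notin K -> w i = 0,
        \sum_i w i = 1 & x = \sum_i w i *: v i].

Definition is_kfacet (k : nat) (K : {set 'I_l.+1}) : bool := #|K| == k.+1.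

(* a face = an (l-1)-facet: l vertices, nonempty *)
Definition is_face (K : {set 'I_l.+1}) : bool := (K != set0) && (#|K| == l).

Definition codim (K : {set 'I_l.+1}) : nat := (l - (#|K|).-1)%N.

Definition union_of (Fs : {set {set 'I_l.+1}}) : 'rV[R]_n -> Prop :=
  fun x => exists2 F, F \in Fs & conv_hull F x.

Definition subset_pts (A B : 'rV[R]_n -> Prop) : Prop := forall x, A x -> B x.

(* P is (the underlying space of) a simplicial complex inside D: it is the
   union of a family S of facets of D, closed under taking (nonempty) faces,
   any two of which intersect in a common facet (or in the empty set). *)
Definition simplicial_complex_in (P : 'rV[R]_n -> Prop) : Prop :=
  exists S : {set {set 'I_l.+1}},
    [/\ forall K : {set 'I_l.+1}, K \in S -> K != set0,
        forall K K' : {set 'I_l.+1}, K \in S -> K' \subset K -> K' != set0 -> K' \in S,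
        forall K K' : {set 'I_l.+1}, K \in S -> K' \in S -> forall x,
          (conv_hull K x /\ conv_hull K' x) <-> conv_hull (K :&: K') x
      & forall x, P x <-> exists2 K, K \in S & conv_hull K x].

Definition kfacets_in (P : 'rV[R]_n -> Prop) (k : nat) : {set {set 'I_l.+1}} :=
  [set K | is_kfacet k K && `[< subset_pts (conv_hull K) P >]].

Definition facets_not_in (P : 'rV[R]_n -> Prop) : {set {set 'I_l.+1}} :=
  [set K | (K != set0) && ~~ `[< subset_pts (conv_hull K) P >]].
End Simplex.

From mathcomp Require Import all_boot all_order all_algebra.
From mathcomp Require Import boolp.
From mathcomp Require Import zify ring.
Import Order.TTheory GRing.Theory Num.Theory.
Set Implicit Arguments. Unset Strict Implicit. Unset Printing Implicit Defensive.

(* Affine independence makes barycentric coordinates unique. Hence the hulls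
   of two vertex sets meet in the hull of their intersection, and (testing at
   the barycenter) the hull of K lies in the union P of the hulls of the F in
   Fs iff K is contained in some F; so P is the complex of all nonempty subsets
   of members of Fs. Each face is the face [set~ i] opposite a vertex i; if M
   is the set of the m vertices so obtained, K lies in P iff K misses a vertex
   of M. So the facets outside P are the sets containing M, i.e. the
   complements of subsets of the l + 1 - m vertices outside M, which gives
   (ii); and the k-facets in P number C(l+1, k+1) - C(l+1-m, l-k), which an
   alternating binomial identity turns into the inclusion-exclusion sum. *)

Section OppositeFaces.
Variable T : finType.

Definition opposite_faces (M : {set T}) : {set {set T}} := [set [set~ i] | i in M].

Lemma card_opposite_faces (M : {set T}) : #|opposite_faces M| = #|M|.
Proof. by apply: card_imset => i j /setC_inj /set1_inj. Qed.

Lemma sub_opposite_face (M K : {set T}) :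
  (exists2 F, F \in opposite_faces M & K \subset F) <-> ~~ (M \subset K).
Proof.
have sub_opp i : (K \subset [set~ i]) = (i \notin K).
  by rewrite subsetC sub1set inE.
split=> [[_ /imsetP[i Mi ->]] | /subsetPn[i Mi iK]].
  by rewrite sub_opp => iK; apply/subsetPn; exists i.
by exists [set~ i]; [exact: imset_f | rewrite sub_opp].
Qed.

Lemma opposite_faces_vertices (Fs : {set {set T}}) :
  (forall F, F \in Fs -> #|~: F| = 1%N) ->
  Fs = opposite_faces [set i | [set~ i] \in Fs].
Proof.
move=> card_coF; apply/setP => F; apply/idP/imsetP => [FsF | [i]].
  have /eqP/cards1P[i coF] := card_coF F FsF.
  by exists i; rewrite ?inE -coF setCK.
by rewrite inE => FsF ->.
Qed.

Lemma card_supsets_compl (A : {set T}) (j : nat) :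
  #|[set K : {set T} | A \subset K & #|~: K| == j]| = 'C(#|~: A|, j).
Proof.
rewrite -cards_draws -[RHS](card_preimset _ (@setC_inj T)).
by apply: eq_card => K; rewrite !inE setCS.
Qed.

Lemma card_supsets_card (A : {set T}) (s : nat) : s <= #|T| ->
  #|[set K : {set T} | #|K| == s] :&: [set K : {set T} | A \subset K]| =
  'C(#|~: A|, #|T| - s).
Proof.
move=> le_sT; rewrite -card_supsets_compl; apply: eq_card => K.
rewrite !inE andbC; congr (_ && _); apply/eqP/eqP; have := cardsC K; lia.
Qed.

Lemma card_supsets (A : {set T}) : #|[set K : {set T} | A \subset K]| = 2 ^ #|~: A|.
Proof.
rewrite -card_powerset -[RHS](card_preimset _ (@setC_inj T)).
by apply: eq_card => K; rewrite !inE setCS.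
Qed.

End OppositeFaces.

Local Open Scope ring_scope.

Lemma alternating_binomial_sum m a s :
  \sum_(0 <= r < m.+1) (-1) ^+ r * ('C(m, r) * 'C(m + a - r, s))%:Z =
  (if (m <= s)%N then 'C(a, s - m) else 0)%:Z.
Proof.
elim: m a s => [|m IH] a s.
  by rewrite big_nat1 expr0 mul1r bin0 mul1n !subn0 add0n.
rewrite big_nat_recl // expr0 mul1r bin0 mul1n subn0.
have pascal i : (0 <= i < m.+1)%N ->
    (-1) ^+ i.+1 * ('C(m.+1, i.+1) * 'C(m.+1 + a - i.+1, s))%:Z =
    (-1) ^+ i.+1 * ('C(m, i.+1) * 'C(m + a.+1 - i.+1, s))%:Z
    - (-1) ^+ i * ('C(m, i) * 'C(m + a - i, s))%:Z.
  by move=> _; rewrite binS addSn subSS addnS subSS mulnDl PoszD exprS; ring.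
rewrite (eq_big_nat _ _ pascal) sumrB.
rewrite [X in _ + (X - _)]big_nat_recr //= (@bin_small m m.+1) //.
rewrite mul0n mulr0 addr0.
have IHa := IH a.+1 s; rewrite big_nat_recl // expr0 mul1r bin0 mul1n subn0 in IHa.
rewrite IH addSn -addnS addrA IHa.
case: (ltngtP m s) => [lt_ms|lt_sm|<-].
- have -> : (s - m = (s - m.+1).+1)%N by lia.
  by rewrite binS PoszD; ring.
- by rewrite subrr.
- by rewrite subnn !bin0 subrr.
Qed.

Lemma inclusion_exclusion_binomial m N s : (m <= N)%N -> (s <= N)%N ->
  'C(N, s)%:Z - 'C(N - m, N - s)%:Z =
  \sum_(1 <= r < m.+1) (-1) ^+ r.-1 * ('C(N - r, s) * 'C(m, r))%:Z.
Proof.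
move=> le_mN le_sN.
have := alternating_binomial_sum m (N - m) s.
rewrite big_nat_recl // expr0 mul1r bin0 mul1n subn0 (subnKC le_mN) big_add1.
have -> : (if (m <= s)%N then 'C(N - m, s - m) else 0%N) = 'C(N - m, N - s).
  case: ifP => le_ms; last by rewrite bin_small //; lia.
  by rewrite -bin_sub; [congr binomial|]; lia.
move=> <-; rewrite opprD addNKr -sumrN; apply: eq_bigr => r _.
by rewrite exprS !PoszM; ring.
Qed.

Section Hulls.
Variables (R : realFieldType) (n l : nat) (v : 'I_l.+1 -> 'rV[R]_n).

Lemma conv_hull_subset (K K' : {set 'I_l.+1}) x :
  K \subset K' -> conv_hull v K x -> conv_hull v K' x.
Proof.
move=> sKK' [w [w_ge0 wK w_sum ->]]; exists w; split=> // i iK'.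
by apply: wK; apply: contra iK'; apply: (subsetP sKK').
Qed.

Lemma conv_hull_set0 x : ~ conv_hull v set0 x.
Proof.
move=> [w [_ w0 w_sum _]].
have : \sum_i w i = 0 by apply: big1 => i _; apply: w0; rewrite inE.
by rewrite w_sum; apply/eqP; rewrite oner_eq0.
Qed.

Definition barycenter_coord (K : {set 'I_l.+1}) (i : 'I_l.+1) : R :=
  if i \in K then #|K|%:R^-1 else 0.

Lemma barycenter_coord_sum (K : {set 'I_l.+1}) :
  K != set0 -> \sum_i barycenter_coord K i = 1.
Proof.
move=> K0; rewrite -big_mkcond /= sumr_const -[_ *+ _]mulr_natr mulVf //.
by rewrite pnatr_eq0 -lt0n card_gt0.
Qed.

Lemma conv_hull_barycenter (K : {set 'I_l.+1}) :
  K != set0 -> conv_hull v K (\sum_i barycenter_coord K i *: v i).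
Proof.
move=> K0; exists (barycenter_coord K); split=> //.
- by move=> i; rewrite /barycenter_coord; case: ifP; rewrite ?invr_ge0 ?ler0n.
- by move=> i /negbTE iK; rewrite /barycenter_coord iK.
- exact: barycenter_coord_sum.
Qed.

Hypothesis v_indep : affine_indep v.

Lemma affine_coord_uniq (w w' : 'I_l.+1 -> R) :
  \sum_i w i = 1 -> \sum_i w' i = 1 ->
  \sum_i w i *: v i = \sum_i w' i *: v i -> w =1 w'.
Proof.
move=> w_sum w'_sum eq_pts i; apply/eqP; rewrite -subr_eq0; apply/eqP.
apply: (v_indep (c := fun i => w i - w' i)).
  by rewrite sumrB w_sum w'_sum subrr.
under eq_bigr do rewrite scalerBl.
by rewrite sumrB eq_pts subrr.
Qed.

Lemma conv_hull_setI (K K' : {set 'I_l.+1}) x :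
  conv_hull v K x -> conv_hull v K' x -> conv_hull v (K :&: K') x.
Proof.
move=> [w [w_ge0 wK w_sum ex]] [w' [_ w'K' w'_sum ex']].
exists w; split=> // i; rewrite inE negb_and => /orP[/wK // | /w'K' <-].
exact: affine_coord_uniq w_sum w'_sum (etrans (esym ex) ex') i.
Qed.

Lemma barycenter_conv_hull_subset (K K' : {set 'I_l.+1}) : K != set0 ->
  conv_hull v K' (\sum_i barycenter_coord K i *: v i) -> K \subset K'.
Proof.
move=> K0 [w [_ wK' w_sum ex]].
have eq_w := affine_coord_uniq (barycenter_coord_sum K0) w_sum ex.
apply/subsetP => i iK; apply/negPn/negP => /wK' wi0.
move: (eq_w i); rewrite wi0 /barycenter_coord iK => /eqP.
by rewrite invr_eq0 pnatr_eq0 cards_eq0 (negbTE K0).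
Qed.

Lemma conv_hull_sub_union (Fs : {set {set 'I_l.+1}}) (K : {set 'I_l.+1}) :
  K != set0 ->
  subset_pts (conv_hull v K) (union_of v Fs) <-> exists2 F, F \in Fs & K \subset F.
Proof.
move=> K0; split=> [/(_ _ (conv_hull_barycenter K0)) [F FsF hullF] | ].
  by exists F; last exact: barycenter_conv_hull_subset hullF.
by move=> [F FsF sKF] x hullK; exists F; last exact: conv_hull_subset hullK.
Qed.

Lemma union_of_simplicial (Fs : {set {set 'I_l.+1}}) :
  simplicial_complex_in v (union_of v Fs).
Proof.
exists [set K | (K != set0) && [exists F in Fs, K \subset F]]; split.
- by move=> K; rewrite inE => /andP[].
- move=> K K'; rewrite !inE => /andP[_ /exists_inP[F FsF sKF]] sK'K ->.
  by apply/exists_inP; exists F; last exact: subset_trans sKF.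
- move=> K K' _ _ x; split=> [[]|hull]; first exact: conv_hull_setI.
  by split; apply: conv_hull_subset hull; [exact: subsetIl | exact: subsetIr].
- move=> x; split=> [[F FsF hullF] | [K]].
    exists F => //; rewrite inE; apply/andP; split.
      by apply: contraPneq (@conv_hull_set0 x) => F0; rewrite -F0.
    by apply/exists_inP; exists F.
  rewrite inE => /andP[_ /exists_inP[F FsF sKF]] hullK.
  by exists F; last exact: conv_hull_subset hullK.
Qed.

End Hulls.

Section OppositeFacesOfSimplex.
Variables (R : realFieldType) (n l : nat) (v : 'I_l.+1 -> 'rV[R]_n).
Hypothesis v_indep : affine_indep v.
Variable M : {set 'I_l.+1}.
Let P := union_of v (opposite_faces M).

Lemma conv_hull_in_opposite_faces (K : {set 'I_l.+1}) : K != set0 ->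
  `[< subset_pts (conv_hull v K) P >] = ~~ (M \subset K).
Proof.
move=> K0; apply/asboolP/idP.
  by move/(conv_hull_sub_union v_indep _ K0)/sub_opposite_face.
by move/sub_opposite_face/(conv_hull_sub_union v_indep _ K0).
Qed.

Lemma facets_not_in_opposite_faces :
  M != set0 -> facets_not_in v P = [set K : {set 'I_l.+1} | M \subset K].
Proof.
move=> M0; apply/setP => K; rewrite !inE.
have [->|K0] := eqVneq K set0; first by rewrite subset0 (negbTE M0).
by rewrite conv_hull_in_opposite_faces // negbK.
Qed.

Lemma kfacets_in_opposite_faces k :
  kfacets_in v P k =
  [set K : {set 'I_l.+1} | #|K| == k.+1] :\: [set K : {set 'I_l.+1} | M \subset K].
Proof.
apply/setP => K; rewrite !inE /is_kfacet andbC.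
have [cardK|] := eqVneq #|K| k.+1; last by rewrite !andbF.
by rewrite conv_hull_in_opposite_faces // -card_gt0 cardK.
Qed.

End OppositeFacesOfSimplex.

Local Close Scope ring_scope.

Lemma codim_card_compl l (K : {set 'I_l.+1}) : K != set0 -> codim K = #|~: K|.
Proof.
rewrite -card_gt0 /codim => K_gt0.
have := cardsC K; rewrite card_ord; lia.
Qed.

Lemma faces_opposite_vertices l (Fs : {set {set 'I_l.+1}}) :
  Fs != set0 -> (forall F, F \in Fs -> is_face F) ->
  exists2 M, Fs = opposite_faces M & M != set0.
Proof.
move=> Fs0 Fs_faces.
have Fs_opp : Fs = opposite_faces [set i | [set~ i] \in Fs].
  apply: opposite_faces_vertices => F /Fs_faces /andP[_ /eqP cardF].
  by rewrite cardsCs setCK card_ord cardF subSnn.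
exists [set i | [set~ i] \in Fs] => //.
rewrite Fs_opp in Fs0; apply: contraNneq Fs0 => ->.
by rewrite /opposite_faces imset0.
Qed.

Theorem lemma2p1 (R : realFieldType) (n l : nat) (v : 'I_l.+1 -> 'rV[R]_n)
    (Fs : {set {set 'I_l.+1}}) :
  affine_indep v -> Fs != set0 -> (forall F, F \in Fs -> is_face F) ->
  let m := #|Fs| in
  let P := union_of v Fs in
  let C := facets_not_in v P in
  (simplicial_complex_in v P /\
   forall k, k <= l ->
     (#|kfacets_in v P k|%:Z =
      \sum_(1 <= r < m.+1) ((-1) ^+ r.-1 * ('C(l.+1 - r, k.+1) * 'C(m, r))%:Z))%R)
  /\
  [/\ forall K, K \in C -> codim K <= l.+1 - m,
      forall j, #|[set K in C | codim K == j]| = 'C(l.+1 - m, j)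
    & #|C| = 2 ^ (l.+1 - m)].
Proof.
move=> v_indep Fs0 /(faces_opposite_vertices Fs0)[M -> M0] m P C.
have card_compl_M : #|~: M| = l.+1 - m.
  by rewrite /m card_opposite_faces cardsCs setCK card_ord.
have le_ml : m <= l.+1.
  by rewrite /m card_opposite_faces -[X in _ <= X]card_ord max_card.
have CE : C = [set K : {set 'I_l.+1} | M \subset K].
  exact: facets_not_in_opposite_faces.
have supM_neq0 (K : {set 'I_l.+1}) : M \subset K -> K != set0.
  by move=> MK; apply: contraNneq M0 => K0; rewrite -subset0 -K0.
split; [split|rewrite CE; split].
- exact: union_of_simplicial.
- move=> k le_kl; rewrite kfacets_in_opposite_faces //.
  rewrite cardsD -subzn ?subset_leq_card ?subsetIl // card_draws.
  rewrite card_supsets_card card_ord ?card_compl_M //.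
  exact: inclusion_exclusion_binomial.
- move=> K; rewrite inE => MK.
  by rewrite codim_card_compl ?supM_neq0 // -card_compl_M subset_leq_card ?setCS.
- move=> j; rewrite -card_compl_M -card_supsets_compl; apply: eq_card => K.
  rewrite !inE; have [MK|] //= := boolP (M \subset K).
  by rewrite codim_card_compl ?supM_neq0.
- by rewrite card_supsets card_compl_M.
Qed.
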